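(* Let $p$ be a prime, let $R$ be a GWNC ring with $p\in{\rm Nil}(R)$, and let $G$ be a locally finite $p$-group. Then the group ring $RG$ is GWNC.
   Context: All rings are associative with identity. For a ring $S$, $U(S)$, ${\rm Nil}(S)$, ${\rm Id}(S)$ denote units, nilpotents, idempotents. $S$ is GWNC if every $a\in S\setminus U(S)$ can be written as $a=q+e$ or $a=q-e$ with $q\in{\rm Nil}(S)$, $e\in{\rm Id}(S)$. A group is a $p$-group if the order of each element is a power of $p$; it is locally finite if every finitely generated subgroup is finite. *)

From HB Require Import structures.
From mathcomp Require Import all_boot all_order all_algebra.
Set Implicit Arguments. Unset Strict Implicit. Unset Printing Implicit Defensive.
Import GRing.Theory.
Local Open Scope ring_scope.

Definition is_unit_r (S : pzRingType) (a : S) : Prop :=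
  exists b : S, a * b = 1 /\ b * a = 1.
Definition is_nil_r (S : pzRingType) (a : S) : Prop := exists n : nat, a ^+ n = 0.
Definition is_idem_r (S : pzRingType) (e : S) : Prop := e * e = e.

Definition GWNC (S : pzRingType) : Prop :=
  forall a : S, ~ is_unit_r a ->
    exists q e : S, is_nil_r q /\ is_idem_r e /\ (a = q + e \/ a = q - e).

Definition elt_order (G : groupType) (x : G) (n : nat) : Prop :=
  (0 < n)%N /\ natexp x n = monoid.one /\
  forall m : nat, (0 < m)%N -> natexp x m = monoid.one -> (n <= m)%N.

Definition is_p_group (p : nat) (G : groupType) : Prop :=
  forall x : G, exists k : nat, elt_order x (p ^ k).

Inductive gen_by (G : groupType) (s : seq G) : G -> Prop :=
  | gen_one : gen_by s monoid.one
  | gen_in  : forall x, x \in s -> gen_by s x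
  | gen_mul : forall x y, gen_by s x -> gen_by s y -> gen_by s (monoid.mul x y)
  | gen_inv : forall x, gen_by s x -> gen_by s (monoid.inv x).

Definition locally_finite (G : groupType) : Prop :=
  forall s : seq G, exists t : seq G, forall x, gen_by s x -> x \in t.

(* ---------- the group ring RG ----------
   Elements of RG are represented by finite formal sums  sum_i r_i g_i ,
   i.e. lists of pairs (r_i, g_i); two representatives denote the same
   element of RG iff they have the same coefficient at every g in G. *)
Section GroupRing.
Variables (R : pzRingType) (G : groupType).

Definition grp := seq (R * G).

Definition gr_coef (a : grp) (x : G) : R := \sum_(u <- a | u.2 == x) u.1.
Definition gr_eq (a b : grp) : Prop := forall x : G, gr_coef a x = gr_coef b x.

Definition gr_zero : grp := [::].
Definition gr_one : grp := [:: (1, monoid.one)].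
Definition gr_add (a b : grp) : grp := a ++ b.
Definition gr_opp (a : grp) : grp := [seq (- u.1, u.2) | u <- a].
Definition gr_sub (a b : grp) : grp := gr_add a (gr_opp b).
Definition gr_mul (a b : grp) : grp :=
  [seq (u.1 * v.1, monoid.mul u.2 v.2) | u <- a, v <- b].
Fixpoint gr_exp (a : grp) (n : nat) : grp :=
  if n is n'.+1 then gr_mul a (gr_exp a n') else gr_one.

Definition gr_unit (a : grp) : Prop :=
  exists b : grp, gr_eq (gr_mul a b) gr_one /\ gr_eq (gr_mul b a) gr_one.
Definition gr_nil (a : grp) : Prop := exists n : nat, gr_eq (gr_exp a n) gr_zero.
Definition gr_idem (e : grp) : Prop := gr_eq (gr_mul e e) e.

Definition GWNC_group_ring : Prop :=
  forall a : grp, ~ gr_unit a ->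
    exists q e : grp, gr_nil q /\ gr_idem e /\
      (gr_eq a (gr_add q e) \/ gr_eq a (gr_sub q e)).
End GroupRing.

(* The support of a non-unit a of RG generates a finite p-subgroup H, and
   right multiplication represents RH faithfully by matrices over R permuting
   the coordinates indexed by H.  A finite p-group acts unipotently in
   characteristic p, so a product of |H| factors (h - 1) is divisible by p
   in ZH; as p^k = 0 in R, products of |H| k such factors vanish in RH, i.e.
   the augmentation ideal of RH is nilpotent.  Hence an element of RH is a
   unit, resp. nilpotent, as soon as its augmentation is.  So the
   augmentation of a is a non-unit q + f or q - f of R with q nilpotent and
   f idempotent, and then a - f, resp. a + f, is nilpotent. *)

From HB Require Import structures.
From Stdlib Require Import ClassicalEpsilon.
From mathcomp Require Import all_boot all_order all_algebra all_fingroup all_solvable all_character.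
From mathcomp Require Import zify.
Set Implicit Arguments. Unset Strict Implicit. Unset Printing Implicit Defensive.
Import GRing.Theory.
Local Open Scope ring_scope.

Section ModularUnipotence.
Variables (F : fieldType) (p : nat) (gT : finGroupType) (G : {group gT}).
Hypotheses (pcharFp : p \in [pchar F]) (pG : (p.-group G)%g).

Lemma in_factmod_prod_sub1 n (rG : mx_representation F G n) U (modU : mxmodule rG U)
    (w : seq gT) : all (mem G) w -> forall m (A : 'M_(m, n)),
  in_factmod U (A *m \prod_(x <- w) (rG x - 1)) =
  in_factmod U A *m \prod_(x <- w) (factmod_repr modU x - 1).
Proof.
elim: w => [|y w IHw] /=; first by move=> _ m A; rewrite !big_nil !mulmx1.
case/andP=> Gy Gw m A; rewrite !big_cons -!mulmxE !mulmxA IHw //.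
by rewrite !mulmxBr !mulmx1 linearB /= in_factmodJ.
Qed.

(* The fixed space U of G is nonzero, so by induction on the dimension the
   first rank(n/U) factors map everything into U, which the next one kills. *)
Lemma prod_repr_sub1_eq0 n (rG : mx_representation F G n) (w : seq gT) :
  all (mem G) w -> (n <= size w)%N -> \prod_(x <- w) (rG x - 1) = 0.
Proof.
elim: n.+1 {-2}n (ltnSn n) rG w => // N IHN [|d] ltdN rG w Gw le_d_w.
  exact: flatmx0.
set U := rfix_mx rG G; have modU : mxmodule rG U := rfix_mx_module rG.
pose k : nat := \rank (cokermx U).
have lt_k_d : (k < d.+1)%N.
  have U_neq0 : U != 0 := rfix_pgroup_pchar pcharFp rG (ltn0Sn d) pG (subxx G).
  by rewrite /k mxrank_coker -subn_gt0 subKn ?rank_leq_col // lt0n mxrank_eq0.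
move: Gw; rewrite -(cat_take_drop k w) all_cat big_cat /= => /andP[Gw1 Gw2].
case Ew2: (drop k w) Gw2 => [|x w2] /=.
  by move/(f_equal size)/eqP: Ew2; rewrite size_drop subn_eq0 leqNgt (leq_trans lt_k_d).
case/andP=> Gx _.
have fixed_w1 : (\prod_(y <- take k w) (rG y - 1) <= U)%MS.
  rewrite -in_factmod_eq0 -[X in in_factmod U X]mul1mx in_factmod_prod_sub1 //.
  rewrite (IHN k _ (factmod_repr modU)) ?mulmx0 //; first exact: leq_trans lt_k_d ltdN.
  by rewrite size_takel // ltnW // (leq_trans lt_k_d).
rewrite big_cons mulrA -mulmxE mulmxBr mulmx1.
by move/rfix_mxP: fixed_w1 => -> //; rewrite subrr mul0mx.
Qed.

End ModularUnipotence.

Lemma map_prod_perm_mx_sub1 (R : pzRingType) n (w : seq {perm 'I_n}) :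
  map_mx intr (\prod_(σ <- w) (perm_mx σ - 1 : 'M[int]_n))
    = \prod_(σ <- w) (perm_mx σ - 1 : 'M[R]_n).
Proof.
elim: w => [|σ w IHw]; first by rewrite !big_nil map_mx1.
by rewrite !big_cons -!mulmxE map_mxM IHw map_mxB map_mx1 map_perm_mx.
Qed.

Section PermPGroup.
Variables (n p : nat) (K : {group {perm 'I_n}}).
Hypotheses (p_pr : prime p) (pK : (p.-group K)%g).

Lemma prod_perm_mx_sub1_Fp_eq0 (w : seq {perm 'I_n}) :
  all (mem K) w -> (n <= size w)%N ->
  \prod_(σ <- w) (perm_mx σ - 1 : 'M['F_p]_n) = 0.
Proof.
have rK : mx_repr K (fun σ => perm_mx σ : 'M['F_p]_n).
  by split=> [|σ τ _ _]; [exact: perm_mx1 | exact: perm_mxM].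
exact: (prod_repr_sub1_eq0 (pchar_Fp p_pr) pK (MxRepresentation rK)).
Qed.

Lemma prod_perm_mx_sub1_dvdz k (w : seq {perm 'I_n}) :
  all (mem K) w -> (n * k <= size w)%N -> forall i j,
  ((p ^ k)%:Z %| (\prod_(σ <- w) (perm_mx σ - 1 : 'M[int]_n)) i j)%Z.
Proof.
elim: k w => [|k IHk] w Kw le_nk_w i j; first by rewrite expn0 dvd1z.
move: Kw; rewrite -(cat_take_drop n w) all_cat big_cat /= => /andP[Kw1 Kw2].
rewrite -mulmxE mxE; apply: rpred_sum => l _; rewrite expnS PoszM dvdz_mul //.
  have le_n_w1 : (n <= size (take n w))%N.
    by rewrite size_takel // (leq_trans _ le_nk_w) // leq_pmulr.
  have := congr1 (fun M : 'M['F_p]_n => M i l) (map_prod_perm_mx_sub1 _ (take n w)).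
  rewrite prod_perm_mx_sub1_Fp_eq0 // !mxE => /eqP.
  by rewrite (dvdz_pcharf (pchar_Fp p_pr)).
by apply: IHk => //; rewrite size_drop; move: le_nk_w; rewrite mulnS; lia.
Qed.

Lemma prod_perm_mx_sub1_eq0 (R : pzRingType) k (w : seq {perm 'I_n}) :
  (p%:R : R) ^+ k = 0 -> all (mem K) w -> (n * k <= size w)%N ->
  \prod_(σ <- w) (perm_mx σ - 1 : 'M[R]_n) = 0.
Proof.
move=> pk0 Kw le_nk_w; apply/matrixP => i j.
rewrite -map_prod_perm_mx_sub1 !mxE.
have /dvdzP[c ->] := prod_perm_mx_sub1_dvdz Kw le_nk_w i j.
by rewrite intrM -pmulrn natrX pk0 mulr0.
Qed.

End PermPGroup.

Lemma scalemxM_comm (R : pzRingType) m n l (A : 'M[R]_(m, n)) (B : 'M[R]_(n, l)) a b :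
  (forall i j r, A i j * r = r * A i j) -> (a *: A) *m (b *: B) = (a * b) *: (A *m B).
Proof.
move=> cA; apply/matrixP => i j; rewrite !mxE mulr_sumr; apply: eq_bigr => k _.
by rewrite !mxE mulrA -(mulrA a) cA !mulrA.
Qed.

Lemma map_intmx_comm (R : pzRingType) m n (A : 'M[int]_(m, n)) i j (r : R) :
  map_mx intr A i j * r = r * map_mx intr A i j.
Proof. by rewrite mxE mulrzl mulrzr. Qed.

Lemma perm_mx_comm (R : pzRingType) n (σ : {perm 'I_n}) i j (r : R) :
  perm_mx σ i j * r = r * perm_mx σ i j.
Proof. by rewrite -(map_perm_mx (intr : {rmorphism int -> R})) map_intmx_comm. Qed.

Lemma nilpotent_sub1_inv (R : pzRingType) (w : R) N : w ^+ N = 0 ->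
  (1 - w) * \sum_(i < N) w ^+ i = 1 /\ (\sum_(i < N) w ^+ i) * (1 - w) = 1.
Proof.
move=> wN0; have geom : (1 - w) * \sum_(i < N) w ^+ i = 1.
  by rewrite -opprB mulNr -subrX1 wN0 sub0r opprK.
split=> //; rewrite -{2}geom; apply/esym/commr_sum => i _.
by apply: commrX; rewrite /GRing.comm mulrBl mulrBr mul1r mulr1.
Qed.

Section AugmentationPowers.
Variables (R : pzRingType) (n : nat) (K : {group {perm 'I_n}}).
Local Notation prod_sub1 w := (\prod_(σ <- w) (perm_mx σ - 1) : 'M[R]_n).

(* Inside the matrix ring 'M[R]_n, the m-th power of the augmentation ideal of
   RK is spanned by products of m factors (perm_mx σ - 1); left coefficients
   suffice since permutation matrices have central entries. *)
Definition aug_pow m (X : 'M[R]_n) := exists2 l : seq (R * seq {perm 'I_n}),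
  all (fun c => all (mem K) c.2 && (m <= size c.2)%N) l &
  X = \sum_(c <- l) c.1 *: prod_sub1 c.2.

Lemma scale_prod_sub1M w (B : 'M[R]_n) a b :
  (a *: prod_sub1 w) *m (b *: B) = (a * b) *: (prod_sub1 w *m B).
Proof. by rewrite scalemxM_comm // -map_prod_perm_mx_sub1; exact: map_intmx_comm. Qed.

Lemma aug_pow0 m : aug_pow m 0.
Proof. by exists [::]; rewrite ?big_nil. Qed.

Lemma aug_pow01 : aug_pow 0 1.
Proof. by exists [:: (1, [::])]; rewrite ?big_seq1 ?big_nil ?scale1r. Qed.

Lemma aug_powD m X Y : aug_pow m X -> aug_pow m Y -> aug_pow m (X + Y).
Proof.
case=> [l1 h1 ->] [l2 h2 ->]; exists (l1 ++ l2); first by rewrite all_cat h1 h2.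
by rewrite big_cat.
Qed.

Lemma aug_powZ m r X : aug_pow m X -> aug_pow m (r *: X).
Proof.
case=> [l h ->]; exists [seq (r * c.1, c.2) | c <- l]; first by rewrite all_map.
by rewrite big_map scaler_sumr; apply: eq_bigr => c _; rewrite scalerA.
Qed.

Lemma aug_powMs m X r : aug_pow m X -> aug_pow m (X *m r%:M).
Proof.
case=> [l h ->]; exists [seq (c.1 * r, c.2) | c <- l]; first by rewrite all_map.
rewrite big_map mulmx_suml; apply: eq_bigr => c _.
by rewrite -scalemx1 scale_prod_sub1M mulmx1.
Qed.

Lemma aug_pow_leq m m' X : (m' <= m)%N -> aug_pow m X -> aug_pow m' X.
Proof.
move=> le_m'm [l h ->]; exists l => //; apply: sub_all h => c /andP[-> /=].
exact: leq_trans.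
Qed.

Lemma aug_powM m m' X Y : aug_pow m X -> aug_pow m' Y -> aug_pow (m + m') (X *m Y).
Proof.
case=> [l1 h1 ->] [l2 h2 ->].
exists [seq (c.1 * d.1, c.2 ++ d.2) | c <- l1, d <- l2].
  apply/allP => _ /allpairsP[[c d] [cl dl ->]] /=.
  case/andP: (allP h1 c cl) => Kc le_c; case/andP: (allP h2 d dl) => Kd le_d.
  by rewrite all_cat Kc Kd size_cat leq_add.
rewrite big_allpairs_dep mulmx_suml; apply: eq_bigr => c _.
rewrite mulmx_sumr; apply: eq_bigr => d _.
by rewrite scale_prod_sub1M big_cat mulmxE.
Qed.

Lemma aug_powX m X j : aug_pow m X -> aug_pow (m * j) (X ^+ j).
Proof.
move=> hX; elim: j => [|j IHj]; first by rewrite muln0 expr0; exact: aug_pow01.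
by rewrite exprS mulnS -mulmxE; apply: aug_powM.
Qed.

Lemma aug_pow_sub_scalarX X q j :
  aug_pow 1 (X - q%:M) -> aug_pow 1 (X ^+ j - (q ^+ j)%:M).
Proof.
move=> hX; elim: j => [|j IHj]; first by rewrite expr0 subrr; exact: aug_pow0.
have -> : X ^+ j.+1 - (q ^+ j.+1)%:M =
    q%:M *m (X ^+ j - (q ^+ j)%:M) + (X - q%:M) *m (X ^+ j - (q ^+ j)%:M)
    + (X - q%:M) *m (q ^+ j)%:M.
  rewrite -mulmxDl [q%:M + _]addrC subrK mulmxBr mulmxBl -scalar_mxM !mulmxE -!exprS.
  by rewrite addrA subrK.
apply: aug_powD; last exact: aug_powMs.
apply: aug_powD; first by rewrite mul_scalar_mx; exact: aug_powZ.
exact: aug_pow_leq (aug_powM hX IHj).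
Qed.

Variables (p k : nat).
Hypotheses (p_pr : prime p) (pK : (p.-group K)%g) (pk0 : (p%:R : R) ^+ k = 0).

Lemma aug_pow_eq0 X : aug_pow (n * k) X -> X = 0.
Proof.
case=> [l h ->]; rewrite big_seq big1 // => c cl.
case/andP: (allP h c cl) => Kc le_c.
by rewrite (prod_perm_mx_sub1_eq0 p_pr pK pk0) ?scaler0.
Qed.

Lemma aug_pow_nilpotent X q N :
  aug_pow 1 (X - q%:M) -> q ^+ N = 0 -> X ^+ (N * (n * k)) = 0.
Proof.
move=> hX qN0; rewrite exprM; apply: aug_pow_eq0.
have := aug_powX (n * k) (aug_pow_sub_scalarX N hX).
by rewrite qN0 (raddf0 (@scalar_mx R n)) subr0 mul1n.
Qed.

Definition aug_inv (v : R) (X : 'M[R]_n) : 'M[R]_n :=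
  (\sum_(i < n * k) (1 - v%:M * X) ^+ i) * v%:M.

(* With W := 1 - v X in the augmentation ideal, aug_inv v X is the
   truncated geometric series (1 - W)^-1 followed by v. *)
Lemma aug_invP X u v : aug_pow 1 (X - u%:M) -> u * v = 1 -> v * u = 1 ->
  X * aug_inv v X = 1 /\ aug_inv v X * X = 1.
Proof.
move=> hX uv1 vu1; set W := 1 - v%:M * X.
have W_aug : aug_pow 1 W.
  have -> : W = (- v) *: (X - u%:M).
    rewrite scalerBr scale_scalar_mx mulNr vu1 -mul_scalar_mx !raddfN /=.
    by rewrite mulNmx opprK addrC.
  exact: aug_powZ.
have := aug_powX (n * k) W_aug; rewrite mul1n => /aug_pow_eq0/nilpotent_sub1_inv.
rewrite /aug_inv /W opprB addrC subrK => -[vXS SvX].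
have X_eq : X = u%:M * (v%:M * X).
  by rewrite mulrA -mulmxE -scalar_mxM uv1 mul1mx.
split; last by rewrite -mulrA SvX.
by rewrite {1}X_eq -mulrA (mulrA (v%:M * X)) vXS mul1r -mulmxE -scalar_mxM uv1.
Qed.

End AugmentationPowers.

(* The identity when f is not injective. *)
Definition perm_of_fun m (f : 'I_m -> 'I_m) : {perm 'I_m} :=
  if injectiveP f is ReflectT f_inj then perm f_inj else 1%g.

Lemma perm_of_funE m (f : 'I_m -> 'I_m) : injective f -> perm_of_fun f =1 f.
Proof. by rewrite /perm_of_fun; case: injectiveP => // f_inj _ i; rewrite permE. Qed.

Section GroupRingCoef.
Variables (R : pzRingType) (G : groupType).
Implicit Types a b : grp R G.

Lemma gr_coefD a b x : gr_coef (gr_add a b) x = gr_coef a x + gr_coef b x.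
Proof. by rewrite /gr_coef /gr_add big_cat. Qed.

Lemma gr_coefN a x : gr_coef (gr_opp a) x = - gr_coef a x.
Proof. by rewrite /gr_coef /gr_opp big_map sumrN. Qed.

Lemma gr_coefB a b x : gr_coef (gr_sub a b) x = gr_coef a x - gr_coef b x.
Proof. by rewrite gr_coefD gr_coefN. Qed.

Lemma gr_eq_subrK a b : gr_eq a (gr_add (gr_sub a b) b).
Proof. by move=> x; rewrite gr_coefD gr_coefB subrK. Qed.

Lemma gr_eq_addrK a b : gr_eq a (gr_sub (gr_add a b) b).
Proof. by move=> x; rewrite gr_coefB gr_coefD addrK. Qed.

Lemma gr_idem_scalar (f : R) : is_idem_r f -> gr_idem ([:: (f, monoid.one)] : grp R G).
Proof. by move=> ff x; rewrite /gr_mul /= monoid.mulg1 ff. Qed.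

Definition gr_aug a : R := \sum_(u <- a) u.1.

Lemma gr_augD a b : gr_aug (gr_add a b) = gr_aug a + gr_aug b.
Proof. by rewrite /gr_aug big_cat. Qed.

Lemma gr_augB a b : gr_aug (gr_sub a b) = gr_aug a - gr_aug b.
Proof. by rewrite gr_augD /gr_aug big_map sumrN. Qed.

Lemma gr_aug_scalar (r : R) : gr_aug ([:: (r, monoid.one)] : grp R G) = r.
Proof. exact: big_seq1. Qed.

End GroupRingCoef.

Section RegularPerm.
Variables (G : groupType) (s : seq G).
Hypotheses (s_uniq : uniq s) (s1 : monoid.one \in s)
  (s_mul : forall x y, x \in s -> y \in s -> monoid.mul x y \in s).
Local Notation nth_s := (nth monoid.one s).

(* s enumerates a finite submonoid H of G, so that R-valued matrices indexed
   by positions in s model RH acting on itself by right multiplication. *)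
Definition rmul_idx (g : G) (i : 'I_(size s)) : 'I_(size s) :=
  insubd i (index (monoid.mul (nth_s i) g) s).

Lemma rmul_idx_val g i : g \in s ->
  val (rmul_idx g i) = index (monoid.mul (nth_s i) g) s.
Proof. by move=> sg; rewrite val_insubd index_mem s_mul ?mem_nth. Qed.

Lemma nth_rmul_idx g i : g \in s -> nth_s (rmul_idx g i) = monoid.mul (nth_s i) g.
Proof. by move=> sg; rewrite rmul_idx_val // nth_index // s_mul ?mem_nth. Qed.

Lemma rmul_idx_inj g : g \in s -> injective (rmul_idx g).
Proof.
move=> sg i j /(congr1 (nth_s \o val)) /=; rewrite !nth_rmul_idx // => /monoid.mulIg.
by move/eqP; rewrite nth_uniq // => /eqP/val_inj.
Qed.

Definition rperm g := perm_of_fun (rmul_idx g).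

Lemma rpermE g i : g \in s -> rperm g i = rmul_idx g i.
Proof. by move=> sg; rewrite perm_of_funE //; exact: rmul_idx_inj. Qed.

Lemma nth_rperm g i : g \in s -> nth_s (rperm g i) = monoid.mul (nth_s i) g.
Proof. by move=> sg; rewrite rpermE // nth_rmul_idx. Qed.

Lemma rpermM x y : x \in s -> y \in s -> rperm (monoid.mul x y) = (rperm x * rperm y)%g.
Proof.
move=> sx sy; apply/permP => i; rewrite permM; apply: val_inj.
by rewrite !rpermE ?s_mul // !rmul_idx_val ?s_mul // nth_index ?s_mul ?mem_nth // monoid.mulgA.
Qed.

Lemma rperm1 : rperm monoid.one = 1%g.
Proof.
apply/permP => i; rewrite perm1 rpermE //; apply: val_inj.
by rewrite rmul_idx_val // monoid.mulg1 index_uniq.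
Qed.

Lemma mem_natexp g m : g \in s -> natexp g m \in s.
Proof. by move=> sg; elim: m => [|m IHm] //; rewrite monoid.expgS s_mul. Qed.

Lemma rpermX g m : g \in s -> rperm (natexp g m) = (rperm g ^+ m)%g.
Proof.
move=> sg; elim: m => [|m IHm]; first exact: rperm1.
by rewrite monoid.expgS rpermM ?mem_natexp // IHm expgS.
Qed.

Lemma rperm_group_set : group_set [set σ | σ \in map rperm s].
Proof.
apply/group_setP; split=> [|σ τ]; first by rewrite inE -rperm1 map_f.
rewrite !inE => /mapP[x sx ->] /mapP[y sy ->].
by rewrite -rpermM // map_f // s_mul.
Qed.

Definition rperm_group := Group rperm_group_set.

Lemma mem_rperm_group g : g \in s -> rperm g \in rperm_group.
Proof. by move=> sg; rewrite inE map_f. Qed.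

Lemma rperm_pgroup p : prime p ->
  (forall g, g \in s -> exists k, natexp g (p ^ k) = monoid.one) ->
  (p.-group rperm_group)%g.
Proof.
move=> p_pr s_pelt; apply/pgroupP => q q_pr /(Cauchy q_pr)[σ].
rewrite inE => /mapP[g sg ->] ord_q; have [k gk1] := s_pelt g sg.
have : (#[rperm g]%g %| p ^ k)%N by rewrite order_dvdn -rpermX // gk1 rperm1.
by rewrite ord_q (Euclid_dvdX _ _ q_pr) (dvdn_prime2 q_pr p_pr) inE => /andP[].
Qed.

Section GroupRingMatrix.
Variable R : pzRingType.
Implicit Types a b : grp R G.

Definition gr_on a := all (fun u => u.2 \in s) a.

Definition gr_mx a : 'M[R]_(size s) := \sum_(u <- a) u.1 *: perm_mx (rperm u.2).

Lemma gr_on_scalar r : gr_on [:: (r, monoid.one)].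
Proof. by rewrite /gr_on /= s1. Qed.

Lemma gr_onD a b : gr_on a -> gr_on b -> gr_on (gr_add a b).
Proof. by rewrite /gr_on all_cat => -> ->. Qed.

Lemma gr_onN a : gr_on a -> gr_on (gr_opp a).
Proof. by rewrite /gr_on all_map. Qed.

Lemma gr_onM a b : gr_on a -> gr_on b -> gr_on (gr_mul a b).
Proof.
move=> aon bon; apply/allP => _ /allpairsP[[u v] [au bv ->]] /=.
by apply: s_mul; [exact: (allP aon) | exact: (allP bon)].
Qed.

Lemma gr_mx_scalar r : gr_mx [:: (r, monoid.one)] = r%:M.
Proof. by rewrite /gr_mx big_seq1 rperm1 // perm_mx1 scalemx1. Qed.

Lemma gr_mxD a b : gr_mx (gr_add a b) = gr_mx a + gr_mx b.
Proof. by rewrite /gr_mx big_cat. Qed.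

Lemma gr_mxN a : gr_mx (gr_opp a) = - gr_mx a.
Proof. by rewrite /gr_mx big_map -sumrN; apply: eq_bigr => u _; rewrite scaleNr. Qed.

Lemma gr_mxM a b : gr_on a -> gr_on b -> gr_mx (gr_mul a b) = gr_mx a * gr_mx b.
Proof.
move=> aon bon; rewrite /gr_mx big_allpairs_dep -mulmxE mulmx_suml.
rewrite big_seq [RHS]big_seq; apply: eq_bigr => u au.
rewrite mulmx_sumr big_seq [RHS]big_seq; apply: eq_bigr => v bv.
rewrite scalemxM_comm; last exact: perm_mx_comm.
by rewrite -perm_mxM -rpermM //; [exact: (allP aon) | exact: (allP bon)].
Qed.

Lemma gr_onX a j : gr_on a -> gr_on (gr_exp a j).
Proof. by move=> aon; elim: j => [|j IHj]; [exact: gr_on_scalar | exact: gr_onM]. Qed.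

Lemma gr_mxX a j : gr_on a -> gr_mx (gr_exp a j) = gr_mx a ^+ j.
Proof.
move=> aon; elim: j => [|j IHj]; first exact: gr_mx_scalar.
by rewrite gr_mxM ?gr_onX // IHj exprS.
Qed.

Definition in_gr_mx (X : 'M[R]_(size s)) := exists2 a, gr_on a & gr_mx a = X.

Lemma in_gr_mx_scalar r : in_gr_mx r%:M.
Proof. by exists [:: (r, monoid.one)]; [exact: gr_on_scalar | exact: gr_mx_scalar]. Qed.

Lemma in_gr_mxB X Y : in_gr_mx X -> in_gr_mx Y -> in_gr_mx (X - Y).
Proof.
case=> [a aon <-] [b bon <-]; exists (gr_sub a b); last by rewrite gr_mxD gr_mxN.
by apply: gr_onD; last exact: gr_onN.
Qed.

Lemma in_gr_mxD X Y : in_gr_mx X -> in_gr_mx Y -> in_gr_mx (X + Y).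
Proof.
case=> [a aon <-] [b bon <-]; exists (gr_add a b); last exact: gr_mxD.
exact: gr_onD.
Qed.

Lemma in_gr_mxM X Y : in_gr_mx X -> in_gr_mx Y -> in_gr_mx (X * Y).
Proof.
case=> [a aon <-] [b bon <-]; exists (gr_mul a b); last exact: gr_mxM.
exact: gr_onM.
Qed.

Lemma in_gr_mxX X j : in_gr_mx X -> in_gr_mx (X ^+ j).
Proof.
move=> hX; elim: j => [|j IHj]; last by rewrite exprS; exact: in_gr_mxM.
exact: in_gr_mx_scalar 1.
Qed.

Lemma in_gr_mx_sum m (F : 'I_m -> 'M[R]_(size s)) :
  (forall i, in_gr_mx (F i)) -> in_gr_mx (\sum_(i < m) F i).
Proof.
move=> hF; apply: big_ind => //; last exact: in_gr_mxD.
by rewrite -(raddf0 (@scalar_mx R (size s))); exact: in_gr_mx_scalar.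
Qed.

Let idx1 : 'I_(size s) := Ordinal (etrans (index_mem _ _) s1).

Lemma rperm_idx1 g (j : 'I_(size s)) : g \in s -> (rperm g idx1 == j) = (g == nth_s j).
Proof.
move=> sg; apply/eqP/eqP => [<-|->]; first by rewrite nth_rperm // nth_index // monoid.mul1g.
apply: val_inj; rewrite rpermE ?mem_nth // rmul_idx_val ?mem_nth //=.
by rewrite nth_index // monoid.mul1g index_uniq.
Qed.

Lemma gr_coef_mx a (j : 'I_(size s)) : gr_on a -> gr_coef a (nth_s j) = gr_mx a idx1 j.
Proof.
move=> aon; rewrite /gr_coef /gr_mx summxE big_mkcond big_seq [RHS]big_seq.
apply: eq_bigr => u au; rewrite !mxE rperm_idx1; last exact: (allP aon).
by case: eqP; rewrite ?mulr1 ?mulr0.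
Qed.

Lemma gr_coef_out a x : gr_on a -> x \notin s -> gr_coef a x = 0.
Proof.
move=> aon sNx; rewrite /gr_coef big_seq_cond big1 // => u /andP[au /eqP ux].
by move: sNx; rewrite -ux (allP aon).
Qed.

Lemma gr_mx_inj a b : gr_on a -> gr_on b -> gr_mx a = gr_mx b -> gr_eq a b.
Proof.
move=> aon bon eq_ab x; have [sx|sNx] := boolP (x \in s); last by rewrite !gr_coef_out.
have ix_lt : (index x s < size s)%N by rewrite index_mem.
rewrite -(nth_index monoid.one sx) -[index x s]/(val (Ordinal ix_lt)).
by rewrite !gr_coef_mx // eq_ab.
Qed.

Lemma gr_mx_sub_aug a :
  gr_on a -> aug_pow rperm_group 1 (gr_mx a - (gr_aug a)%:M).
Proof.
move=> aon; exists [seq (u.1, [:: rperm u.2]) | u <- a].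
  by rewrite all_map; apply/allP => u au /=; rewrite mem_rperm_group ?(allP aon).
rewrite big_map /gr_mx /gr_aug -scalemx1 scaler_suml -sumrB.
by apply: eq_bigr => u _; rewrite big_seq1 scalerBr.
Qed.

Variables (p k : nat).
Hypotheses (p_pr : prime p) (pk0 : (p%:R : R) ^+ k = 0)
  (s_pelt : forall g, g \in s -> exists e, natexp g (p ^ e) = monoid.one).
Local Notation pK := (rperm_pgroup p_pr s_pelt).

Lemma gr_nil_of_aug a : gr_on a -> is_nil_r (gr_aug a) -> gr_nil a.
Proof.
move=> aon [N augN0]; exists (N * (size s * k))%N.
apply: gr_mx_inj => //; first exact: gr_onX.
rewrite gr_mxX // (aug_pow_nilpotent p_pr pK pk0 (gr_mx_sub_aug aon) augN0).
by rewrite /gr_mx big_nil.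
Qed.

Lemma gr_unit_of_aug a : gr_on a -> is_unit_r (gr_aug a) -> gr_unit a.
Proof.
move=> aon [v [uv1 vu1]].
have [a_inv inv_a] := aug_invP p_pr pK pk0 (gr_mx_sub_aug aon) uv1 vu1.
have [b bon gr_mx_b] : in_gr_mx (aug_inv k v (gr_mx a)).
  apply: in_gr_mxM (in_gr_mx_scalar _); apply: in_gr_mx_sum => i.
  apply/in_gr_mxX/in_gr_mxB; first exact: in_gr_mx_scalar 1.
  by apply: in_gr_mxM (in_gr_mx_scalar _) _; exists a.
exists b; split; apply: gr_mx_inj; try exact: gr_onM; try exact: gr_on_scalar.
  by rewrite gr_mxM // gr_mx_b a_inv gr_mx_scalar.
by rewrite gr_mxM // gr_mx_b inv_a gr_mx_scalar.
Qed.

End GroupRingMatrix.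

End RegularPerm.

Lemma locally_finite_gen_seq (G : groupType) : locally_finite G ->
  forall l : seq G, exists2 s : seq G, uniq s & forall x, x \in s <-> gen_by l x.
Proof.
move=> lfG l; have [t tP] := lfG l.
pose in_gen x := if excluded_middle_informative (gen_by l x) then true else false.
exists (undup [seq x <- t | in_gen x]); first exact: undup_uniq.
move=> x; rewrite mem_undup mem_filter /in_gen.
by case: excluded_middle_informative => gx; split=> // _; rewrite tP.
Qed.

Theorem lemma3p2 (p : nat) (R : pzRingType) (G : groupType)
  (hp : prime p) (hR : GWNC R) (hpnil : is_nil_r (p%:R : R))
  (hGp : is_p_group p G) (hGlf : locally_finite G) :
  GWNC_group_ring R G.
Proof.
move=> a a_nunit.
have [s s_uniq s_gen] := locally_finite_gen_seq hGlf (map snd a).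
have s1 : monoid.one \in s by apply/s_gen; exact: gen_one.
have s_mul x y : x \in s -> y \in s -> monoid.mul x y \in s.
  by move=> /s_gen sx /s_gen sy; apply/s_gen; exact: gen_mul.
have s_pelt g : g \in s -> exists e, natexp g (p ^ e) = monoid.one.
  by move=> _; have [e [_ [ge1 _]]] := hGp g; exists e.
have a_on : gr_on s a by apply/allP => u au; apply/s_gen/gen_in/map_f.
have [k pk0] := hpnil.
have [q [f [q_nil [f_idem aug_a]]]] := hR (gr_aug a) (fun aug_unit =>
  a_nunit (gr_unit_of_aug s_uniq s1 s_mul hp pk0 s_pelt a_on aug_unit)).
pose e : grp R G := [:: (f, monoid.one)].
have nil_of_aug b : gr_on s b -> gr_aug b = q -> gr_nil b.
  move=> bon aug_b; apply: (gr_nil_of_aug s_uniq s1 s_mul hp pk0 s_pelt bon).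
  by rewrite aug_b.
have e_on : gr_on s e by exact: gr_on_scalar.
have e_idem : gr_idem e := gr_idem_scalar f_idem.
case: aug_a => aug_a.
- exists (gr_sub a e), e; split; last by split=> //; left; exact: gr_eq_subrK.
  by apply: nil_of_aug; [exact: gr_onD (gr_onN _) | rewrite gr_augB gr_aug_scalar aug_a addrK].
- exists (gr_add a e), e; split; last by split=> //; right; exact: gr_eq_addrK.
  by apply: nil_of_aug; [exact: gr_onD | rewrite gr_augD gr_aug_scalar aug_a subrK].
Qed.
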